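(* For all integers $\alpha,\beta,\gamma,\delta,\epsilon$ with $\alpha,\gamma,\delta>0$, the map $$(h,j,k,m,n)\mapsto\big(\alpha\gamma^2\delta^2h+j\alpha\gamma^2\delta(\delta-1)/2,\ \alpha\gamma\delta j-\alpha\delta\epsilon k-\beta m,\ \alpha\gamma\delta k,\ \gamma m,\ \delta n\big)$$ is an injective group homomorphism from $\mathrm H_{5,3}$ into $\mathrm H_{5,3}(\alpha,\beta,\gamma,\delta,\epsilon)$. Consequently each $\mathrm H_{5,3}(\alpha,\beta,\gamma,\delta,\epsilon)$ (with parameters as in the classification of discrete cocompact subgroups of $\mathrm G_{5,3}$) is isomorphic to a subgroup of every other one.
   Context: For integers $\alpha,\beta,\gamma,\delta,\epsilon$, $\mathrm H_{5,3}(\alpha,\beta,\gamma,\delta,\epsilon)$ denotes $\mathbb Z^5$ with multiplication $$(h,j,k,m,n)(h',j',k',m',n')=\big(h+h'+\gamma nj'+\alpha\gamma m'n(n-1)/2+\beta nm'+\delta mk'+\epsilon nk',\ j+j'+\alpha nm',\ k+k',\ m+m',\ n+n'\big),$$ and $\mathrm H_{5,3}=\mathrm H_{5,3}(1,0,1,1,0)$. It is known (and may be used) that every $\mathrm H_{5,3}(\alpha,\beta,\gamma,\delta,\epsilon)$ with $\alpha,\gamma,\delta>0$ is isomorphic to a subgroup of $\mathrm H_{5,3}$. *)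

From Stdlib Require Import ZArith.
Open Scope Z_scope.

Definition Z5 : Type := (Z * Z * Z * Z * Z)%type.

(* Multiplication of H_{5,3}(alpha,beta,gamma,delta,epsilon).
   The divisions by 2 are exact (n(n-1) is even). *)
Definition H53mul (alpha beta gamma delta epsilon : Z) (x y : Z5) : Z5 :=
  let '(h, j, k, m, n) := x in
  let '(h', j', k', m', n') := y in
  (h + h' + gamma * n * j' + alpha * gamma * m' * (n * (n - 1) / 2)
     + beta * n * m' + delta * m * k' + epsilon * n * k',
   j + j' + alpha * n * m',
   k + k',
   m + m',
   n + n').

Definition H53std : Z5 -> Z5 -> Z5 := H53mul 1 0 1 1 0.

Definition is_hom (mul1 mul2 : Z5 -> Z5 -> Z5) (f : Z5 -> Z5) : Prop :=
  forall x y, f (mul1 x y) = mul2 (f x) (f y).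

Definition injective (f : Z5 -> Z5) : Prop :=
  forall x y, f x = f y -> x = y.

(* "isomorphic to a subgroup of": there is an injective homomorphism. *)
Definition embeds (mul1 mul2 : Z5 -> Z5 -> Z5) : Prop :=
  exists f, is_hom mul1 mul2 f /\ injective f.

Definition embed_map (alpha beta gamma delta epsilon : Z) (x : Z5) : Z5 :=
  let '(h, j, k, m, n) := x in
  (alpha * gamma ^ 2 * delta ^ 2 * h + j * (alpha * gamma ^ 2 * delta * (delta - 1) / 2),
   alpha * gamma * delta * j - alpha * delta * epsilon * k - beta * m,
   alpha * gamma * delta * k,
   gamma * m,
   delta * n).

(* The map is a homomorphism because the only nonlinear term of the
   multiplication, the binomial coefficient n(n-1)/2, transforms under the
   scaling n |-> delta n as
     (delta n)(delta n - 1)/2 = delta^2 n(n-1)/2 + n delta(delta-1)/2,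
   and the correction term j * alpha gamma^2 delta(delta-1)/2 in the first
   coordinate absorbs the second summand.  It is injective because it is
   triangular with nonzero diagonal coefficients.  Composing an embedding into
   H_{5,3} with this one gives an embedding between any two of the groups. *)

From Stdlib Require Import ZArith Lia.
Open Scope Z_scope.

Lemma pronic_even (n : Z) : 2 * (n * (n - 1) / 2) = n * (n - 1).
Proof.
  symmetry; apply Z_div_exact_2; [lia|].
  destruct (Zeven_odd_dec n) as [Hn | Hn].
  - apply Zeven_ex in Hn as [q ->].
    replace (2 * q * (2 * q - 1)) with ((q * (2 * q - 1)) * 2) by ring.
    apply Z_mod_mult.
  - apply Zodd_ex in Hn as [q ->].
    replace ((2 * q + 1) * (2 * q + 1 - 1)) with ((q * (2 * q + 1)) * 2) by ring.
    apply Z_mod_mult.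
Qed.

Lemma div2_double (q : Z) : 2 * q / 2 = q.
Proof. rewrite Z.mul_comm; apply Z.div_mul; lia. Qed.

Lemma mul_pronic_div2 (c d : Z) : c * d * (d - 1) / 2 = c * (d * (d - 1) / 2).
Proof.
  rewrite <- (div2_double (c * (d * (d - 1) / 2))).
  f_equal; transitivity (c * (2 * (d * (d - 1) / 2))); [rewrite pronic_even|]; ring.
Qed.

Lemma pronic_div2_scale (d n : Z) :
  d * n * (d * n - 1) / 2 = d ^ 2 * (n * (n - 1) / 2) + n * (d * (d - 1) / 2).
Proof.
  rewrite <- (div2_double (_ + _)); f_equal.
  transitivity (d ^ 2 * (2 * (n * (n - 1) / 2)) + n * (2 * (d * (d - 1) / 2)));
    [rewrite !pronic_even | ]; ring.
Qed.

Lemma embed_map_hom (alpha beta gamma delta epsilon : Z) :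
  is_hom H53std (H53mul alpha beta gamma delta epsilon)
         (embed_map alpha beta gamma delta epsilon).
Proof.
  intros [[[[h j] k] m] n] [[[[h' j'] k'] m'] n'].
  unfold H53std, H53mul, embed_map.
  rewrite !mul_pronic_div2, pronic_div2_scale.
  f_equal; [f_equal; [f_equal; [f_equal|]|]|]; ring.
Qed.

Lemma embed_map_inj (alpha beta gamma delta epsilon : Z) :
  0 < alpha -> 0 < gamma -> 0 < delta ->
  injective (embed_map alpha beta gamma delta epsilon).
Proof.
  intros Ha Hg Hd [[[[h j] k] m] n] [[[[h' j'] k'] m'] n'] E.
  unfold embed_map in E; injection E as Eh Ej Ek Em En.
  assert (Hagd : alpha * gamma * delta <> 0) by (apply Z.neq_mul_0; split; lia).
  assert (Hlead : alpha * gamma ^ 2 * delta ^ 2 <> 0).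
  { apply Z.neq_mul_0; split; [apply Z.neq_mul_0; split|]; try lia;
      apply Z.pow_nonzero; lia. }
  apply Z.mul_reg_l in En; [|lia].
  apply Z.mul_reg_l in Em; [|lia].
  apply Z.mul_reg_l in Ek; [|exact Hagd].
  subst n' m' k'.
  assert (Ej' : j = j') by (apply (Z.mul_reg_l _ _ _ Hagd); lia); subst j'.
  assert (Eh' : h = h') by (apply (Z.mul_reg_l _ _ _ Hlead); lia); subst h'.
  reflexivity.
Qed.

Lemma is_hom_comp (mul1 mul2 mul3 : Z5 -> Z5 -> Z5) (f g : Z5 -> Z5) :
  is_hom mul1 mul2 f -> is_hom mul2 mul3 g -> is_hom mul1 mul3 (fun x => g (f x)).
Proof. intros Hf Hg x y; rewrite Hf; apply Hg. Qed.

Lemma injective_comp (f g : Z5 -> Z5) :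
  injective f -> injective g -> injective (fun x => g (f x)).
Proof. intros Hf Hg x y E; apply Hf, Hg, E. Qed.

Lemma embeds_trans (mul1 mul2 mul3 : Z5 -> Z5 -> Z5) :
  embeds mul1 mul2 -> embeds mul2 mul3 -> embeds mul1 mul3.
Proof.
  intros [f [Hf If]] [g [Hg Ig]].
  exists (fun x => g (f x)); split; [apply (is_hom_comp _ mul2) | apply injective_comp]; assumption.
Qed.

Theorem mainTheorem2 :
  forall alpha beta gamma delta epsilon : Z,
    0 < alpha -> 0 < gamma -> 0 < delta ->
    (is_hom H53std (H53mul alpha beta gamma delta epsilon)
            (embed_map alpha beta gamma delta epsilon)
     /\ injective (embed_map alpha beta gamma delta epsilon))
    /\
    ((forall a b c d e : Z, 0 < a -> 0 < c -> 0 < d ->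
        embeds (H53mul a b c d e) H53std) ->
     forall a b c d e a' b' c' d' e' : Z,
       0 < a -> 0 < c -> 0 < d -> 0 < a' -> 0 < c' -> 0 < d' ->
       embeds (H53mul a b c d e) (H53mul a' b' c' d' e')).
Proof.
  intros alpha beta gamma delta epsilon Ha Hg Hd.
  split; [split; [apply embed_map_hom | apply embed_map_inj; assumption]|].
  intros Hsub a b c d e a' b' c' d' e' Ha1 Hc1 Hd1 Ha2 Hc2 Hd2.
  apply (embeds_trans _ H53std); [apply Hsub; assumption|].
  exists (embed_map a' b' c' d' e').
  split; [apply embed_map_hom | apply embed_map_inj; assumption].
Qed.
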